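(* Let $c,o$ be vertices with a directed path from $c$ to $o$. Suppose the open loop $M(s)$ is strictly proper with relative degree $\chi=\deg(ap)-\deg(bq)\ge 1$. Then the relative degree of $T_{co}(s)$ (degree of denominator minus degree of numerator, in lowest terms) is $(\delta_{co}+1)\chi$.
   Context: $\mathcal G$ is a weighted directed graph on $\{1,\dots,N\}$ with adjacency matrix $A=[a_{ij}]$. Here $a_{ij}>0$ if there is an arc from $j$ to $i$ and $a_{ij}=0$ otherwise (no self-loops). The Laplacian is $L=D-A$ with $D=\mathrm{diag}(\sum_j a_{ij})$. A directed path from $u$ to $w$ is a sequence of distinct vertices $u=v_0,\dots,v_\ell=w$ with an arc from $v_k$ to $v_{k+1}$ for each $k$, and $\ell$ is its length. $\delta_{uw}$ is the length of a shortest directed path from $u$ to $w$. $e_i$ is the $i$-th canonical basis vector. Let $a,b,p,q$ be nonzero real polynomials and $M(s)=\frac{b(s)q(s)}{a(s)p(s)}$. The network is $y=M(s)[-Ly+r]$. $T_{co}(s)=e_o^T(I+M(s)L)^{-1}M(s)e_c$ is the transfer function from $r_c$ to $y_o$ with all other inputs zero. *)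

From HB Require Import structures.
From mathcomp Require Import all_boot all_order all_algebra.
From mathcomp Require Import fraction.
Set Implicit Arguments. Unset Strict Implicit. Unset Printing Implicit Defensive.
Import Order.TTheory GRing.Theory Num.Theory.
Local Open Scope ring_scope.

Section Defs.
Variable R : realFieldType.
Variable N : nat.

Definition ratfun := {fraction {poly R}}.
Definition polyF (p : {poly R}) : ratfun := @FracField.tofrac _ p.

(* Weighted digraph with adjacency matrix A: a_ij > 0 iff arc from j to i,
   a_ij = 0 otherwise (so all entries nonnegative), no self loops. *)
Definition adjacency (A : 'M[R]_N) : Prop :=
  (forall i j : 'I_N, 0 <= A i j) /\ (forall i : 'I_N, A i i = 0).

Definition arc (A : 'M[R]_N) : rel 'I_N := fun u w => 0 < A w u.

Definition laplacian (A : 'M[R]_N) : 'M[R]_N :=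
  \matrix_(i, j) ((i == j)%:R * (\sum_k A i k)) - A.

(* A directed path u = v_0, ..., v_l = w of distinct vertices, of length l:
   the sequence s = [v_1; ...; v_l]. *)
Definition dipath (A : 'M[R]_N) (u w : 'I_N) (l : nat) : Prop :=
  exists s : seq 'I_N,
    [/\ size s = l, path (arc A) u s, last u s = w & uniq (u :: s)].

Definition shortest_dist (A : 'M[R]_N) (u w : 'I_N) (delta : nat) : Prop :=
  dipath A u w delta /\ (forall l, dipath A u w l -> (delta <= l)%N).

Definition openloop (a b p q : {poly R}) : ratfun :=
  polyF (b * q) / polyF (a * p).

Definition transfer (A : 'M[R]_N) (M : ratfun) (c o : 'I_N) : ratfun :=
  ((delta_mx 0 o : 'rV[ratfun]_N)
     *m invmx (1%:M + M *: map_mx (fun x => polyF x%:P) (laplacian A))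
     *m (M *: (delta_mx c 0 : 'cV[ratfun]_N))) 0 0.

Definition relative_degree (f : ratfun) (k : int) : Prop :=
  exists n d : {poly R},
    [/\ n != 0, d != 0, coprimep n d, f = polyF n / polyF d
      & (size d)%:Z - (size n)%:Z = k].

End Defs.

From Pilot Require Import Defs.
From HB Require Import structures.
From mathcomp Require Import all_boot all_order all_algebra.
From mathcomp Require Import fraction fingroup perm ring zify.
Import Order.TTheory GRing.Theory Num.Theory.
Local Open Scope ring_scope.
Set Implicit Arguments. Unset Strict Implicit. Unset Printing Implicit Defensive.

(* With d = a p and n = b q, I + M L = P / d for the polynomial matrix
   P = d I + n L, so T_co = n adj(P)_oc / det P.  As deg n < deg d, the diagonal
   of P dominates and deg det P = N deg d.  For the numerator, take the identity
     d^(k+1) adj P = det P * sum_(i <= k) d^(k-i) (-n L)^i + adj P (-n L)^(k+1)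
   at k = delta: a nonzero (L^i)_oc yields a walk of length at most i from c to o,
   so (L^i)_oc = 0 for i < delta, while (L^delta)_oc = (-1)^delta (A^delta)_oc is
   nonzero because A is nonnegative and positive along a shortest path.  Hence the
   (o,c) entry of the first term is det P (-n)^delta (L^delta)_oc, which outgrows
   the remainder, and deg adj(P)_oc = N deg d + delta deg n - (delta+1) deg d.
   Cancelling the gcd does not change the degree difference. *)

Section DetSize.
Variables (R : idomainType) (m : nat).
Implicit Types (M : 'M[{poly R}]_m) (D : nat).

Lemma size_det_leq M D :
  (forall i j, (size (M i j) <= D.+1)%N) -> (size (\det M) <= (m * D).+1)%N.
Proof.
move=> szM; apply: leq_trans (size_sum _ _ _) _.
apply/bigmax_leqP => s _; rewrite size_Msign.
apply: leq_trans (size_poly_prod_leq _ _) _.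
set S := (\sum_(i | _) _)%N.
have : (S <= \sum_(i < m) D.+1)%N by apply: leq_sum.
rewrite sum_nat_const !card_ord mulnS; lia.
Qed.

Lemma size_det_diag_dominant M D :
  (forall i, size (M i i) = D.+1) ->
  (forall i j, i != j -> (size (M i j) <= D)%N) ->
  size (\det M) = (m * D).+1.
Proof.
move=> szdiag szoff.
have szM i j : (size (M i j) <= D.+1)%N.
  by case: (eqVneq i j) => [->|/szoff/leqW//]; rewrite szdiag.
have size_diag : size (\prod_i M i ((1%g : 'S_m) i)) = (m * D).+1.
  rewrite size_prod => [|i _]; last by rewrite perm1 -size_poly_gt0 szdiag.
  under eq_bigr do rewrite perm1 szdiag.
  by rewrite sum_nat_const !card_ord mulnS; lia.
rewrite /determinant (bigD1 1%g) //= odd_perm1 expr0 mul1r size_polyDl size_diag //.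
apply: leq_ltn_trans (size_sum _ _ _) _; rewrite ltnS.
apply/bigmax_leqP => s s_neq1; rewrite size_Msign.
apply: leq_trans (size_poly_prod_leq _ _) _; rewrite card_ord.
have [i0 si0] : exists i0, s i0 != i0.
  apply/existsP; apply: contraR s_neq1 => /existsPn fix_s.
  by apply/eqP/permP => i; rewrite perm1; apply/eqP/negbNE/fix_s.
set S := (\sum_(i | _) _)%N.
have : (S < \sum_(i < m) D.+1)%N.
  rewrite /S (bigD1 i0) // [X in (_ < X)%N](bigD1 i0) //= -addSn.
  by apply: leq_add; [rewrite ltnS szoff // eq_sym | apply: leq_sum].
rewrite sum_nat_const card_ord mulnS; lia.
Qed.

End DetSize.

Section AdjugateExpansion.
Variables (R : comPzRingType) (m : nat) (d : R) (X : 'M[R]_m).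

Lemma scalemxX (a : R) (M : 'M[R]_m) k : (a *: M) ^+ k = a ^+ k *: M ^+ k.
Proof.
elim: k => [|k IH]; first by rewrite !expr0 scale1r.
by rewrite !exprS IH -!mulmxE -scalemxAl -scalemxAr scalerA.
Qed.

(* [d ^+ K.-1] times the truncated Neumann series of [(1 + X / d)^-1]. *)
Definition neumann_sum K : 'M[R]_m := \sum_(k < K) d ^+ (K.-1 - k) *: (- X) ^+ k.

Lemma neumann_sumS K : neumann_sum K.+1 = d *: neumann_sum K + (- X) ^+ K.
Proof.
rewrite /neumann_sum big_ord_recr /= subnn expr0 scale1r scaler_sumr.
congr (_ + _); apply: eq_bigr => k _; rewrite scalerA -exprS.
by have -> : (K - k = (K.-1 - k).+1)%N by have := ltn_ord k; lia.
Qed.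

Lemma adj_neumann_expansion K :
  d ^+ K *: \adj (d%:M + X) =
  \det (d%:M + X) *: neumann_sum K + \adj (d%:M + X) *m (- X) ^+ K.
Proof.
set Q := \adj _; set G := \det _.
have dQ : d *: Q = G%:M - Q *m X.
  by rewrite -mul_adj_mx mulmxDr mul_mx_scalar addrK.
elim: K => [|K IH].
  by rewrite expr0 scale1r /neumann_sum big_ord0 scaler0 add0r expr0 mulmx1.
rewrite exprS -scalerA IH scalerDr neumann_sumS scalerDr !scalerA mulrC -scalerA.
rewrite scalemxAl dQ mulmxBl mul_scalar_mx exprS -mulmxE mulmxA mulmxN mulNmx.
by rewrite addrA.
Qed.

End AdjugateExpansion.

Definition closed_loop_mx (R : idomainType) N (d n : {poly R}) (L : 'M[R]_N) :
  'M[{poly R}]_N := d%:M + n *: map_mx polyC L.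

Section ClosedLoopDegree.
Variables (R : idomainType) (N : nat) (L : 'M[R]_N) (d n : {poly R}).
Hypotheses (n_neq0 : n != 0) (size_n_lt_d : (size n < size d)%N).

Local Notation P := (closed_loop_mx d n L).

Lemma closed_loop_mxE i j : P i j = d *+ (i == j) + n * (L i j)%:P.
Proof. by rewrite !mxE. Qed.

Lemma size_mul_polyC_leq c : (size (n * c%:P)%R <= size n)%N.
Proof.
apply: leq_trans (size_polyMleq _ _) _.
by have := size_polyC_leq1 c; have := size_poly_gt0 n; rewrite n_neq0; lia.
Qed.

Lemma size_closed_loop_mx_diag i : size (P i i) = (size d).-1.+1.
Proof.
rewrite closed_loop_mxE eqxx mulr1n size_polyDl ?prednK //; first lia.
exact: leq_ltn_trans (size_mul_polyC_leq _) size_n_lt_d.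
Qed.

Lemma size_closed_loop_mx_offdiag i j : i != j -> (size (P i j) <= (size d).-1)%N.
Proof.
move=> /negbTE ij; rewrite closed_loop_mxE ij mulr0n add0r.
by apply: leq_trans (size_mul_polyC_leq _) _; lia.
Qed.

Lemma size_closed_loop_mx i j : (size (P i j) <= (size d).-1.+1)%N.
Proof.
case: (eqVneq i j) => [->|/size_closed_loop_mx_offdiag/leqW//].
by rewrite size_closed_loop_mx_diag.
Qed.

Lemma size_det_closed_loop : size (\det P) = (N * (size d).-1).+1.
Proof.
apply: size_det_diag_dominant; [exact: size_closed_loop_mx_diag|].
exact: size_closed_loop_mx_offdiag.
Qed.

Lemma size_adj_closed_loop i j :
  (size (\adj P i j) <= (N.-1 * (size d).-1).+1)%N.
Proof.
rewrite mxE size_Msign; apply: size_det_leq => k l.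
by rewrite 2!mxE; apply: size_closed_loop_mx.
Qed.

Lemma closed_loop_mx_oppX k i j :
  ((- (n *: map_mx polyC L)) ^+ k) i j = (- n) ^+ k * ((L ^+ k) i j)%:P.
Proof.
by rewrite -scaleNr scalemxX -rmorphXn !mxE.
Qed.

End ClosedLoopDegree.

Lemma size_exp_neq0 (R : idomainType) (p : {poly R}) k :
  p != 0 -> size (p ^+ k) = ((size p).-1 * k).+1.
Proof. by move=> p0; rewrite -size_exp prednK // size_poly_gt0 expf_neq0. Qed.

Section ClosedLoopAdjugate.
Variables (R : idomainType) (N : nat) (L : 'M[R]_N) (d n : {poly R}).
Hypotheses (n_neq0 : n != 0) (size_n_lt_d : (size n < size d)%N).
Variables (c o : 'I_N) (delta : nat).
Hypothesis L_short0 : forall k, (k < delta)%N -> (L ^+ k) o c = 0.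
Hypothesis L_delta_neq0 : (L ^+ delta) o c != 0.

Local Notation P := (closed_loop_mx d n L).
Local Notation X := (n *: map_mx polyC L).

Lemma neumann_sum_closed_loop :
  (neumann_sum d X delta.+1) o c = (- n) ^+ delta * ((L ^+ delta) o c)%:P.
Proof.
rewrite neumann_sumS mxE [X in X + _]mxE closed_loop_mx_oppX.
rewrite /neumann_sum summxE big1 ?mulr0 ?add0r // => k _.
by rewrite mxE closed_loop_mx_oppX L_short0 ?ltn_ord // polyC0 !mulr0.
Qed.

Lemma size_neumann_sum_closed_loop :
  size ((neumann_sum d X delta.+1) o c) = (delta * (size n).-1).+1.
Proof.
rewrite neumann_sum_closed_loop size_mul ?expf_neq0 ?oppr_eq0 ?polyC_eq0 //.
by rewrite size_exp_neq0 ?oppr_eq0 // size_polyN size_polyC L_delta_neq0 addn1 mulnC.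
Qed.

Lemma size_neumann_remainder :
  (size ((\adj P *m (- X) ^+ delta.+1) o c) <=
   (N.-1 * (size d).-1 + delta.+1 * (size n).-1).+1)%N.
Proof.
rewrite mxE; apply: leq_trans (size_sum _ _ _) _; apply/bigmax_leqP => j _.
rewrite closed_loop_mx_oppX; apply: leq_trans (size_polyMleq _ _) _.
have := size_adj_closed_loop L n_neq0 size_n_lt_d o j.
have : (size ((- n) ^+ delta.+1 * ((L ^+ delta.+1) j c)%:P)%R <=
        (delta.+1 * (size n).-1).+1)%N.
  apply: leq_trans (size_polyMleq _ _) _.
  rewrite size_exp_neq0 ?oppr_eq0 // size_polyN mulnC size_polyC.
  by case: (_ != 0); rewrite /= ?addn1 ?addn0.
set s := size ((\adj P) o j); set a := size _.
set x := (N.-1 * _)%N; set y := (delta.+1 * _)%N; lia.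
Qed.

Lemma adj_closed_loop_entry :
  \adj P o c != 0 /\
  (size (\adj P o c) + delta.+1 * (size d).-1 =
   N * (size d).-1 + delta * (size n).-1 + 1)%N.
Proof.
have N_gt0 : (0 < N)%N := leq_ltn_trans (leq0n _) (ltn_ord c).
have d_neq0 : d != 0 by rewrite -size_poly_gt0; lia.
have size_det := size_det_closed_loop L n_neq0 size_n_lt_d.
have det_neq0 : \det P != 0 by rewrite -size_poly_gt0 size_det.
have sum_neq0 : (neumann_sum d X delta.+1) o c != 0.
  by rewrite -size_poly_gt0 size_neumann_sum_closed_loop.
have expansion :=
  congr1 (fun M : 'M[{poly R}]_N => M o c) (adj_neumann_expansion d X delta.+1).
rewrite /= [LHS]mxE [RHS]mxE [(_ *: neumann_sum _ _ _) _ _]mxE in expansion.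
have size_main : size (\det P * (neumann_sum d X delta.+1) o c) =
                 (N * (size d).-1 + delta * (size n).-1).+1.
  by rewrite size_mul // size_det size_neumann_sum_closed_loop addSn addnS.
have size_rhs : size (d ^+ delta.+1 * \adj P o c) =
                (N * (size d).-1 + delta * (size n).-1).+1.
  rewrite expansion size_polyDl size_main //.
  apply: leq_ltn_trans size_neumann_remainder _.
  have : (N.-1 * (size d).-1 + (size d).-1 = N * (size d).-1)%N.
    by rewrite -mulSnr prednK.
  have : (0 < size n)%N by rewrite size_poly_gt0.
  rewrite mulSn; lia.
have adj_neq0 : \adj P o c != 0.
  by apply: contra_eq_neq size_rhs => ->; rewrite mulr0 size_poly0.
split=> //; move: size_rhs.
rewrite size_mul ?expf_neq0 // size_exp_neq0 // mulnC.
set s := size ((\adj P) o c); set D := (size d).-1; lia.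
Qed.
End ClosedLoopAdjugate.

Section LaplacianPowers.
Variables (R : realFieldType) (N : nat) (A : 'M[R]_N) (c : 'I_N).
Hypothesis adjA : adjacency A.

Local Notation L := (laplacian A).

Definition walk_within k i := exists s : seq 'I_N,
  [/\ (size s <= k)%N, path (Defs.arc A) c s & last c s = i].

Lemma walk_withinS k i : walk_within k i -> walk_within k.+1 i.
Proof. by case=> s [? ? ?]; exists s; split=> //; apply: leqW. Qed.

Lemma walk_within_arc k i j : walk_within k j -> 0 < A i j -> walk_within k.+1 i.
Proof.
case=> s [size_s path_s last_s] Aij; exists (rcons s i).
by rewrite size_rcons rcons_path path_s last_rcons last_s.
Qed.

Lemma adjacency_gt0 i j : A i j != 0 -> 0 < A i j.
Proof. by rewrite lt_def => ->; apply: adjA.1. Qed.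

Lemma laplacian_offdiag i j : i != j -> L i j = - A i j.
Proof. by move=> /negbTE ij; rewrite !mxE ij mul0r sub0r. Qed.

Lemma laplacianX_neq0_walk k i : (L ^+ k) i c != 0 -> walk_within k i.
Proof.
elim: k i => [|k IH] i.
  rewrite expr0 mxE; case: (eqVneq i c) => [-> _|_]; first by exists [::].
  by rewrite mulr0n eqxx.
rewrite exprS -mulmxE mxE => sum_neq0.
have [j /= Lij_Lkj] : exists j, L i j * (L ^+ k) j c != 0.
  apply/existsP; apply: contraTT sum_neq0 => /existsPn Lk0.
  by rewrite negbK big1 // => j _; apply/eqP/negbNE/Lk0.
have Lkj : (L ^+ k) j c != 0 by apply: contraNneq Lij_Lkj => ->; rewrite mulr0.
case: (eqVneq j i) => [<-|ji]; first exact/walk_withinS/IH.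
apply: walk_within_arc (IH _ Lkj) _; apply: adjacency_gt0.
apply: contraNneq Lij_Lkj; rewrite laplacian_offdiag 1?eq_sym // => ->.
by rewrite oppr0 mul0r.
Qed.

Lemma laplacianX_no_short_walk k i :
  (forall l, (l < k)%N -> ~ walk_within l i) ->
  (L ^+ k) i c = (-1) ^+ k * (A ^+ k) i c.
Proof.
elim: k i => [|k IH] i no_walk; first by rewrite !expr0 mul1r.
rewrite !exprS -!mulmxE !mxE mulr_sumr; apply: eq_bigr => j _.
case: (eqVneq j i) => [->|ji].
  have -> : (L ^+ k) i c = 0.
    by apply/eqP/(contra_notT _ (no_walk k (ltnSn k)))/laplacianX_neq0_walk.
  by rewrite adjA.2 !(mul0r, mulr0).
rewrite laplacian_offdiag 1?eq_sym //.
have [->|Aij] := eqVneq (A i j) 0; first by rewrite oppr0 !(mul0r, mulr0).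
rewrite IH; first by ring.
move=> l lk walk; apply: (no_walk l.+1) => //.
exact: walk_within_arc walk (adjacency_gt0 Aij).
Qed.

Lemma adjacencyX_ge0 k i j : 0 <= (A ^+ k) i j.
Proof.
elim: k i j => [|k IH] i j; first by rewrite expr0 mxE ler0n.
rewrite exprS -mulmxE mxE; apply: sumr_ge0 => l _.
by apply: mulr_ge0 => //; apply: adjA.1.
Qed.

Lemma adjacencyX_path_gt0 s :
  path (Defs.arc A) c s -> 0 < (A ^+ size s) (last c s) c.
Proof.
elim/last_ind: s => [|s x IH]; first by rewrite expr0 mxE eqxx ltr01.
rewrite rcons_path size_rcons last_rcons => /andP[path_s arc_x].
rewrite exprS -mulmxE mxE (bigD1 (last c s)) //=.
apply: ltr_wpDr; last exact: mulr_gt0 arc_x (IH path_s).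
by apply: sumr_ge0 => l _; apply: mulr_ge0; [apply: adjA.1|apply: adjacencyX_ge0].
Qed.

Variables (o : 'I_N) (delta : nat).
Hypothesis dist_co : shortest_dist A c o delta.

Lemma shortest_dist_no_short_walk k : (k < delta)%N -> ~ walk_within k o.
Proof.
case: dist_co => _ minimal k_lt [s [size_s path_s last_s]].
case/shortenP: path_s last_s => s' path_s' uniq_s' sub_s' last_s'.
have := minimal (size s'); have : dipath A c o (size s') by exists s'.
move=> /[swap] /[apply].
have : (size s' <= size s)%N.
  by apply: uniq_leq_size => //; move: uniq_s'; rewrite cons_uniq => /andP[].
lia.
Qed.

Lemma laplacianX_short k : (k < delta)%N -> (L ^+ k) o c = 0.
Proof.
move=> k_lt; apply/eqP/(contra_notT _ (shortest_dist_no_short_walk k_lt)).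
exact: laplacianX_neq0_walk.
Qed.

Lemma laplacianX_dist_neq0 : (L ^+ delta) o c != 0.
Proof.
have [[s [size_s path_s last_s _]] _] := dist_co.
rewrite laplacianX_no_short_walk; last by move=> l; apply: shortest_dist_no_short_walk.
rewrite mulf_neq0 ?signr_eq0 // gt_eqF //.
by have := adjacencyX_path_gt0 path_s; rewrite size_s last_s.
Qed.

End LaplacianPowers.

Section RationalFunctions.
Variable R : realFieldType.
Local Notation tf := (@FracField.tofrac {poly R}).

Lemma relative_degree_frac (f g : {poly R}) : f != 0 -> g != 0 ->
  relative_degree (polyF f / polyF g) ((size g)%:Z - (size f)%:Z).
Proof.
move=> f0 g0; set h := gcdp f g.
have h0 : h != 0 by rewrite gcdp_eq0 negb_and f0.
have fE : f %/ h * h = f by apply/divpK/dvdp_gcdl.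
have gE : g %/ h * h = g by apply/divpK/dvdp_gcdr.
have f'0 : f %/ h != 0 by apply: contra_eq_neq fE => ->; rewrite mul0r eq_sym.
have g'0 : g %/ h != 0 by apply: contra_eq_neq gE => ->; rewrite mul0r eq_sym.
exists (f %/ h), (g %/ h); split => //.
- by rewrite coprimep_div_gcd // f0.
- rewrite -{1}fE -{1}gE /polyF !rmorphM /= invfM mulrACA mulfV ?mulr1 //.
  by rewrite tofrac_eq0.
- rewrite -{2}fE -{2}gE !size_mul // -(prednK (_ : 0 < size h)%N) ?size_poly_gt0 //.
  by rewrite !addnS /= !PoszD; ring.
Qed.

Lemma transfer_closed_loop N (A : 'M[R]_N) (d n : {poly R}) (c o : 'I_N) :
  d != 0 -> \det (closed_loop_mx d n (laplacian A)) != 0 ->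
  transfer A (polyF n / polyF d) c o =
  polyF (n * \adj (closed_loop_mx d n (laplacian A)) o c) /
  polyF (\det (closed_loop_mx d n (laplacian A))).
Proof.
set P := closed_loop_mx _ _ _ => d0 G0; rewrite /transfer /polyF.
set M := tf n / tf d.
set B := 1%:M + M *: map_mx (fun x => tf x%:P) (laplacian A).
have td0 : tf d != 0 by rewrite tofrac_eq0.
have tG0 : tf (\det P) != 0 by rewrite tofrac_eq0.
have PB : map_mx tf P = tf d *: B.
  apply/matrixP => i j; rewrite !mxE tofracD tofracM tofracMn /M.
  move: td0; move: (tf d) (tf n) (tf _%:P) => D0 N0 Y D0_neq0.
  by rewrite mulrDr mulr_natr mulrA (mulrC D0) divfK.
set W := (tf d / tf (\det P)) *: map_mx tf (\adj P).
have BW : B *m W = 1%:M.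
  have -> : B = (tf d)^-1 *: map_mx tf P.
    by rewrite PB scalerA (mulVf td0) scale1r.
  rewrite -scalemxAl -scalemxAr -map_mxM mul_mx_adj map_scalar_mx scalerA.
  by rewrite scale_scalar_mx mulrA (mulVf td0) mul1r (mulVf tG0).
have -> : invmx B = W.
  have [B_unit _] := mulmx1_unit BW.
  by rewrite -[invmx B]mulmx1 -BW mulmxA (mulVmx B_unit) mul1mx.
rewrite -rowE -scalemxAr -colE 5!mxE /M tofracM.
move: td0; move: (tf d) (tf n) (tf (\det P)) (tf (\adj P o c)).
by move=> D0 N0 G C D0_neq0; rewrite !mulrA (divfK D0_neq0) mulrAC.
Qed.
End RationalFunctions.

Unset Implicit Arguments.

Theorem corollary2 (R : realFieldType) (N : nat) (A : 'M[R]_N)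
  (a b p q : {poly R}) (c o : 'I_N) (delta : nat) :
  adjacency A ->
  a != 0 -> b != 0 -> p != 0 -> q != 0 ->
  (size (b * q)%R < size (a * p)%R)%N ->
  shortest_dist A c o delta ->
  relative_degree (transfer A (openloop a b p q) c o)
    ((delta.+1 * (size (a * p)%R - size (b * q)%R))%N)%:Z.
Proof.
move=> adjA a0 b0 p0 q0 size_lt dist_co.
have d0 : a * p != 0 by rewrite mulf_neq0.
have n0 : b * q != 0 by rewrite mulf_neq0.
set P := closed_loop_mx (a * p) (b * q) (laplacian A).
have [adj_neq0 size_adj] := adj_closed_loop_entry n0 size_lt
  (laplacianX_short adjA dist_co) (laplacianX_dist_neq0 adjA dist_co).
have size_det := size_det_closed_loop (laplacian A) n0 size_lt.
have det_neq0 : \det P != 0 by rewrite -size_poly_gt0 size_det.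
have size_gap : size (\det P) = (delta.+1 * (size (a * p)%R - size (b * q)%R) +
                                  size (b * q * \adj P o c)%R)%N.
  rewrite (size_mul n0 adj_neq0) size_det.
  have := size_poly_gt0 (b * q); rewrite n0.
  move: size_adj size_lt; rewrite -/P.
  move: (size (a * p)%R) (size (b * q)%R) (size (\adj P o c)) => [|D] [|E] s //=.
  rewrite subSS mulnBr !mulSn => size_adj lt_ED _.
  have : (delta * E <= delta * D)%N by rewrite leq_mul2l ltnW ?orbT.
  lia.
rewrite /openloop transfer_closed_loop //.
have := relative_degree_frac (mulf_neq0 n0 adj_neq0) det_neq0.
by rewrite size_gap PoszD addrK.
Qed.
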